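(* Let $(\Gamma(-),X)$ be a finite graph of finite groups with fundamental group $\Gamma=\pi_1(\Gamma(-),X)$, and let $T$ be a maximal (spanning) tree of $X$ such that \[ \Gamma(e)^e\neq\Gamma(t(e))\quad\text{and}\quad\Gamma(e)^{\bar e}\neq\Gamma(o(e))\qquad\text{for all } e\in E(T). \] Then the number $|E(X)|$ of (directed) edges of $X$ satisfies $|E(X)|\le 2\mu(\Gamma)$.
   Context: Graphs are in the sense of Serre: vertex set $V(X)$, set $E(X)$ of directed edges with fixed-point-free involution $e\mapsto\bar e$, maps $o,t:E(X)\to V(X)$ with $t(\bar e)=o(e)$. A graph of groups assigns groups $\Gamma(v)$, $\Gamma(e)=\Gamma(\bar e)$ and monomorphisms $\Gamma(e)\to\Gamma(t(e))$, $a\mapsto a^e$; $\Gamma(e)^e\le\Gamma(t(e))$ and $\Gamma(e)^{\bar e}\le\Gamma(o(e))$ denote the images. $\Gamma$ is then a finitely generated virtually free group. Let $m_\Gamma$ be the least common multiple of the orders of the finite subgroups of $\Gamma$ (equivalently $\operatorname{lcm}\{|\Gamma(v)|:v\in V(X)\}$). The free rank $\mu(\Gamma)$ is the rank of a free subgroup of index $m_\Gamma$ in $\Gamma$; equivalently $\mu(\Gamma)=1-m_\Gamma\chi(\Gamma)$ where $\chi(\Gamma)=\sum_{v\in V(X)}|\Gamma(v)|^{-1}-\sum_{e\in\mathcal O(X)}|\Gamma(e)|^{-1}$ for any orientation $\mathcal O(X)$ (one edge chosen from each pair $\{e,\bar e\}$). *)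

From HB Require Import structures.
From mathcomp Require Import all_boot all_order all_fingroup all_algebra.
Import Order.TTheory GRing.Theory Num.Theory.

(* A finite graph in the sense of Serre: vertices, directed edges with a
   fixed-point-free involution e |-> bar e, origin map o; t e := o (bar e). *)
Record graph := Graph {
  vert : finType;
  edge : finType;
  bar : edge -> edge;
  org : edge -> vert;
  barK : involutive bar;
  bar_nofix : forall e, bar e != e }.

Arguments bar {_}. Arguments org {_}.
Definition term (X : graph) (e : edge X) : vert X := org (bar e).

Record gog (X : graph) := GoG {
  VG : vert X -> finGroupType;
  EG : edge X -> finGroupType;
  EG_bar : forall e, EG (bar e) = EG e;
  mono : forall e, EG e -> VG (org (bar e));
  mono_morph : forall e (x y : EG e), mono e (x * y)%g = (mono e x * mono e y)%g;
  mono_inj : forall e, injective (mono e) }.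

Set Implicit Arguments. Unset Strict Implicit. Unset Printing Implicit Defensive.
Arguments term {_}. Arguments VG {_}. Arguments EG {_}. Arguments mono {_} _ _.

(* Gamma(e)^e as a subset of Gamma(t(e)) *)
Definition edge_image (X : graph) (G : gog X) (e : edge X) : {set VG G (term e)} :=
  [set mono G e x | x in [set: EG G e]].

Fixpoint walk_from (X : graph) (u : vert X) (p : seq (edge X)) : bool :=
  match p with
  | [::] => true
  | e :: p' => (org e == u) && walk_from (term e) p'
  end.

Fixpoint walk_end (X : graph) (u : vert X) (p : seq (edge X)) : vert X :=
  match p with
  | [::] => u
  | e :: p' => walk_end (term e) p'
  end.

Definition reduced (X : graph) (p : seq (edge X)) : bool :=
  sorted (fun e f => f != bar e) p.

Definition connected_in (X : graph) (S : {set edge X}) : Prop :=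
  forall u v : vert X, exists p : seq (edge X),
    [&& all (fun e => e \in S) p, walk_from u p & walk_end u p == v].

Definition acyclic_in (X : graph) (S : {set edge X}) : Prop :=
  forall (u : vert X) (p : seq (edge X)),
    p != [::] -> all (fun e => e \in S) p -> walk_from u p -> reduced p ->
    walk_end u p != u.

Definition spanning_tree (X : graph) (S : {set edge X}) : Prop :=
  [/\ forall e, (bar e \in S) = (e \in S),
      (0 < #|vert X|)%N,
      connected_in S &
      acyclic_in S].

Definition m_Gamma (X : graph) (G : gog X) : nat :=
  \big[lcmn/1%N]_(v : vert X) #|VG G v|.

Definition orient (X : graph) (e : edge X) : bool :=
  (enum_rank e < enum_rank (bar e))%N.

Definition chi_Gamma (X : graph) (G : gog X) : rat :=
  (\sum_(v : vert X) (#|VG G v|%:R)^-1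
   - \sum_(e : edge X | orient e) (#|EG G e|%:R)^-1)%R.

Definition mu_Gamma (X : graph) (G : gog X) : rat :=
  (1 - (m_Gamma G)%:R * chi_Gamma G)%R.

From Pilot Require Import Defs.
From HB Require Import structures.
From mathcomp Require Import all_boot all_order all_fingroup all_algebra.
From mathcomp Require Import ring lra.
Import Order.TTheory GRing.Theory Num.Theory.
Set Implicit Arguments. Unset Strict Implicit. Unset Printing Implicit Defensive.

(* With m = m_Gamma, x_v = m/|Gamma(v)| and y_e = m/|Gamma(e)|, one has
   2 mu = 2 - 2 sum_v x_v + sum_e y_e, and y_e >= 1 for every directed edge.
   Root T at a vertex r with a largest group and orient edges by the distance
   from r in T: every v <> r is the terminus of a tree edge e pointing away
   from r, and since Gamma(e)^e is a proper subgroup of Gamma(v), Lagrange gives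
   y_e >= 2 x_v.  As e and bar e never both point away from r,
   sum_e (y_e - 1) >= 2 sum_(v <> r) (2 x_v - 1) >= 2 sum_v x_v - 2,
   the last step because x_r <= x_v for all v (and x_r = 1 if r is the only
   vertex). *)

Lemma proper_card_double (gT : finGroupType) (H K : {group gT}) :
  H \proper K -> (2 * #|H| <= #|K|)%N.
Proof.
case/andP=> sHK nsKH.
by rewrite -(Lagrange sHK) mulnC leq_mul2l indexg_gt1 nsKH orbT.
Qed.

Lemma walk_from_cat (X : graph) (u : vert X) (p q : seq (edge X)) :
  walk_from u (p ++ q) = walk_from u p && walk_from (walk_end u p) q.
Proof. by elim: p u => [|e p IHp] u //=; rewrite IHp andbA. Qed.

Lemma walk_end_cat (X : graph) (u : vert X) (p q : seq (edge X)) :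
  walk_end u (p ++ q) = walk_end (walk_end u p) q.
Proof. by elim: p u => [|e p IHp] u //=. Qed.

Lemma orient_bar (X : graph) (e : edge X) : orient (bar e) = ~~ orient e.
Proof.
have neq_rank : nat_of_ord (enum_rank (bar e)) != enum_rank e.
  by rewrite (inj_eq val_inj) (inj_eq enum_rank_inj) bar_nofix.
by rewrite /orient barK ltn_neqAle neq_rank leqNgt.
Qed.

Local Open Scope ring_scope.

Lemma sum_bar_orient (X : graph) (V : nmodType) (h : edge X -> V) :
  (forall e, h (bar e) = h e) -> \sum_e h e = (\sum_(e | orient e) h e) *+ 2.
Proof.
move=> h_bar; rewrite (bigID (@orient X)) /= mulr2n; congr (_ + _).
rewrite (reindex_inj (inv_inj (@barK X))) /=.
by apply: eq_big => e; rewrite ?orient_bar ?negbK ?h_bar.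
Qed.

Lemma sum_antisym_le (I : finType) (R : numDomainType) (f : I -> I) (A : pred I)
    (z : I -> R) :
    involutive f -> (forall i, A i -> ~~ A (f i)) ->
    (forall i, 0 <= z i) -> (forall i, z (f i) = z i) ->
  (\sum_(i | A i) z i) *+ 2 <= \sum_i z i.
Proof.
move=> fK A_f z_ge0 z_f; rewrite [leRHS](bigID A) /= mulr2n lerD2l.
have A_fN i : A (f i) -> ~~ A i by move/A_f; rewrite fK.
rewrite (reindex_inj (inv_inj fK)) [leRHS](bigID (fun i => A (f i))) /=.
rewrite -[leLHS]addr0 lerD ?sumr_ge0 // le_eqVlt; apply/orP; left.
apply/eqP/eq_big => [i | i _]; last exact: z_f.
by case Afi: (A (f i)); rewrite ?andbT ?andbF ?A_fN.
Qed.

Lemma ler_sum_fiber (I J : finType) (R : numDomainType) (f : I -> J)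
    (P : pred J) (A : pred I) (w : J -> R) (z : I -> R) :
    (forall i, 0 <= z i) ->
    (forall j, P j -> exists2 i, A i & f i = j /\ w j <= z i) ->
  \sum_(j | P j) w j <= \sum_(i | A i) z i.
Proof.
move=> z_ge0 hw; rewrite (partition_big f predT) //=.
apply: (@le_trans _ _ (\sum_(j | P j) \sum_(i | A i && (f i == j)) z i)).
  apply: ler_sum => j Pj; have [i Ai [<- wz]] := hw j Pj.
  rewrite (bigD1 i) /= ?Ai ?eqxx //; apply: le_trans wz _.
  by rewrite lerDl sumr_ge0.
by rewrite [leRHS](bigID P) /= lerDl sumr_ge0 // => j _; rewrite sumr_ge0.
Qed.

Lemma connected_descent (X : graph) (T : {set edge X}) (r : vert X) :
  connected_in T -> exists d : vert X -> nat,
    forall v, v != r -> exists2 e, e \in T & term e = v /\ (d (org e) < d v)%N.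
Proof.
move=> T_conn.
pose has_walk u n := [exists p : n.-tuple (edge X),
  [&& all (mem T) p, walk_from r p & walk_end r p == u]].
have has_walkP u : exists n, has_walk u n.
  have [p /and3P [pT p_from p_end]] := T_conn r u.
  by exists (size p); apply/existsP; exists (in_tuple p); rewrite /= pT p_from p_end.
exists (fun u => ex_minn (has_walkP u)) => v v_neq_r.
case: ex_minnP => n /existsP [[p /= /eqP <-] /and3P [pT p_from p_end]] _.
case/lastP: p pT p_from p_end => [|q e] pT p_from p_end.
  by move: p_end; rewrite eq_sym (negbTE v_neq_r).
move: pT p_from p_end; rewrite all_rcons -!cats1 walk_from_cat walk_end_cat /=.
rewrite andbT => /andP [eT qT] /andP [q_from q_end] /eqP e_end.
exists e => //; split=> //; rewrite size_cat addn1 ltnS.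
case: ex_minnP => n' _; apply; apply/existsP; exists (in_tuple q).
by rewrite /= qT q_from eq_sym q_end.
Qed.

Section GraphOfGroups.

Variables (X : graph) (G : gog X).

Definition mono_morphism (e : edge X) : {morphism [set: EG G e] >-> VG G (term e)} :=
  @Morphism _ _ setT (mono G e) (in2W (@mono_morph X G e)).

Lemma edge_imageE e : edge_image G e = (mono_morphism e @* setT)%g.
Proof. by rewrite morphimEdom. Qed.

Lemma card_edge_image e : #|edge_image G e| = #|EG G e|.
Proof.
rewrite edge_imageE card_injm ?cardsT //.
by apply/injmP; apply: in2W; exact: Defs.mono_inj.
Qed.

Lemma card_EG_le e : (#|EG G e| <= #|VG G (term e)|)%N.
Proof. by rewrite -card_edge_image -cardsT subset_leq_card ?subsetT. Qed.

Lemma card_EG_double_le e :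
  edge_image G e != [set: VG G (term e)] -> (2 * #|EG G e| <= #|VG G (term e)|)%N.
Proof.
move=> im_ne; have : edge_image G e \proper [set: VG G (term e)].
  by rewrite properEneq im_ne subsetT.
rewrite -card_edge_image -cardsT edge_imageE; exact: proper_card_double.
Qed.

Lemma card_VG_gt0 v : (0 < #|VG G v|)%N.
Proof. by apply/card_gt0P; exists 1%g. Qed.

Lemma card_EG_gt0 e : (0 < #|EG G e|)%N.
Proof. by apply/card_gt0P; exists 1%g. Qed.

Lemma card_VG_le_m v : (#|VG G v| <= m_Gamma G)%N.
Proof.
apply: dvdn_leq (biglcmn_sup v isT (dvdnn _)).
apply: (big_ind (fun n => 0 < n)%N) => // [a b|w _]; last exact: card_VG_gt0.
by rewrite lcmn_gt0 => -> ->.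
Qed.

Lemma exists_max_card_VG :
  (0 < #|vert X|)%N -> exists r, forall v, (#|VG G v| <= #|VG G r|)%N.
Proof.
case/card_gt0P=> v0 _; exists [arg max_(r > v0) #|VG G r|].
by case: arg_maxnP => // r _ r_max v; apply: r_max.
Qed.

Definition vertex_weight v : rat := (m_Gamma G)%:R / #|VG G v|%:R.
Definition edge_weight e : rat := (m_Gamma G)%:R / #|EG G e|%:R.

Lemma vertex_weight_ge1 v : 1 <= vertex_weight v.
Proof. by rewrite ler_pdivlMr ?ltr0n ?card_VG_gt0 // mul1r ler_nat card_VG_le_m. Qed.

Lemma edge_weight_ge1 e : 1 <= edge_weight e.
Proof.
rewrite ler_pdivlMr ?ltr0n ?card_EG_gt0 // mul1r ler_nat.
exact: leq_trans (card_EG_le e) (card_VG_le_m _).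
Qed.

Lemma edge_weight_bar e : edge_weight (bar e) = edge_weight e.
Proof. by rewrite /edge_weight EG_bar. Qed.

Lemma vertex_weight_le v w :
  (#|VG G v| <= #|VG G w|)%N -> vertex_weight w <= vertex_weight v.
Proof.
move=> le_vw; rewrite ler_wpM2l ?ler0n // lef_pV2 ?posrE ?ltr0n ?card_VG_gt0 //.
by rewrite ler_nat.
Qed.

Lemma edge_weight_proper e :
  edge_image G e != [set: VG G (term e)] -> 2 * vertex_weight (term e) <= edge_weight e.
Proof.
move/card_EG_double_le; rewrite -(ler_nat rat) natrM => le2.
rewrite /vertex_weight /edge_weight mulrCA ler_wpM2l ?ler0n //.
by rewrite ler_pdivrMr ?ltr0n ?card_VG_gt0 // mulrC ler_pdivlMr ?ltr0n ?card_EG_gt0.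
Qed.

Lemma mu_GammaE :
  2 * mu_Gamma G = 2 - 2 * \sum_v vertex_weight v + \sum_e edge_weight e.
Proof.
have sumV : (m_Gamma G)%:R * \sum_v #|VG G v|%:R^-1 = \sum_v vertex_weight v.
  by rewrite mulr_sumr.
have sumE : (m_Gamma G)%:R * \sum_(e | orient e) #|EG G e|%:R^-1
    = \sum_(e | orient e) edge_weight e.
  by rewrite mulr_sumr.
rewrite (sum_bar_orient edge_weight_bar) /mu_Gamma /chi_Gamma.
rewrite [X in 1 - X]mulrBr sumV sumE; lra.
Qed.

Lemma sum_vertex_weight_le r : (forall v, (#|VG G v| <= #|VG G r|)%N) ->
  \sum_v vertex_weight v - 1 <= \sum_(v | v != r) (2 * vertex_weight v - 1).
Proof.
move=> r_max.
have root_le : vertex_weight r - 1 <= \sum_(v | v != r) (vertex_weight v - 1).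
  case: (pickP (fun v => v != r)) => [w w_neq_r | only_r].
    rewrite (bigD1 w) //= -addrA lerD ?lerB ?vertex_weight_le //.
    by rewrite addrC -lerBlDr subrr sumr_ge0 // => v _; rewrite subr_ge0 vertex_weight_ge1.
  have m_le : (m_Gamma G <= #|VG G r|)%N.
    apply: dvdn_leq (card_VG_gt0 r) _; apply/dvdn_biglcmP => v _.
    by move/negbFE/eqP: (only_r v) => ->.
  by rewrite big_pred0 // subr_le0 ler_pdivrMr ?ltr0n ?card_VG_gt0 // mul1r ler_nat.
have split_sum : \sum_(v | v != r) (2 * vertex_weight v - 1)
    = \sum_(v | v != r) vertex_weight v + \sum_(v | v != r) (vertex_weight v - 1).
  by rewrite -big_split; apply: eq_bigr => v _ /=; ring.
rewrite (bigD1 r) //= split_sum; lra.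
Qed.

End GraphOfGroups.

Theorem lemma5p1 (X : graph) (G : gog X) (T : {set edge X}) :
  spanning_tree T ->
  (forall e : edge X, e \in T ->
     edge_image G e != [set: VG G (term e)] /\
     edge_image G (bar e) != [set: VG G (term (bar e))]) ->
  ((#|edge X|)%:R <= 2 * mu_Gamma G :> rat)%R.
Proof.
move=> [_ V_gt0 T_conn _] T_proper.
have [r r_max] := exists_max_card_VG G V_gt0.
have [d d_desc] := connected_descent r T_conn.
pose z e := edge_weight G e - 1.
have z_ge0 e : 0 <= z e by rewrite subr_ge0 edge_weight_ge1.
pose away e := (d (org e) < d (term e))%N.
have away_bar e : away e -> ~~ away (bar e).
  by rewrite /away /term barK -leqNgt => /ltnW.
have z_bar e : z (bar e) = z e by rewrite /z edge_weight_bar.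
have half := sum_antisym_le (@barK X) away_bar z_ge0 z_bar.
have fiber : \sum_(v | v != r) (2 * vertex_weight G v - 1) <= \sum_(e | away e) z e.
  apply: ler_sum_fiber z_ge0 _ => v /d_desc [e eT [<- de]].
  exists e => //; split=> //; rewrite lerD2r; exact: edge_weight_proper (T_proper e eT).1.
have edges : \sum_e z e = \sum_e edge_weight G e - #|edge X|%:R.
  by rewrite sumrB sumr_const.
have := sum_vertex_weight_le r_max; rewrite mu_GammaE; lra.
Qed.
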